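(* Consider a Boolean control network $\mathbf{x}(t+1)=L\ltimes\mathbf{u}(t)\ltimes\mathbf{x}(t)$, $\mathbf{y}(t)=H\mathbf{x}(t)$, with $L\in\mathcal{L}_{N\times NM}$, $H\in\mathcal{L}_{P\times N}$, a periodic reference output trajectory of minimal period $T\ge1$, $\mathbf{y}_r(s+kT)=\delta_P^{i_s}$ ($s\in[1,T]$, $k\in\mathbb{Z}_+$), and an initial state $\mathbf{x}_0\in\mathcal{L}_N$. Let $\mathbf{v}(t)=H^\top\mathbf{y}_r(t)$ for $t\in[1,T+1]$ (so $\mathbf{v}(T+1)=\mathbf{v}(1)$), $L_{tot}=L_1\vee\cdots\vee L_M$, and $\boldsymbol{\alpha}(1)=\mathbf{v}(1)$, $\boldsymbol{\alpha}(t)=\mathbf{v}(t)\odot(L_{tot}\boldsymbol{\alpha}(t-1))$ for $t\in[2,T+1]$. Define $\boldsymbol{\beta}_1(T+1)=\boldsymbol{\alpha}(T+1)$, $\boldsymbol{\beta}_1(t)=\boldsymbol{\alpha}(t)\odot(L_{tot}^\top\boldsymbol{\beta}_1(t+1))$ for $t=T,\dots,1$, and for $k\ge2$: $\boldsymbol{\beta}_k(T+1)=\boldsymbol{\beta}_{k-1}(T+1)\odot\boldsymbol{\beta}_{k-1}(1)$, $\boldsymbol{\beta}_k(t)=\boldsymbol{\beta}_{k-1}(t)\odot(L_{tot}^\top\boldsymbol{\beta}_k(t+1))$ for $t=T,\dots,1$. Let $\mathcal{X}_t^{(k)}=\{\delta_N^j:[\boldsymbol{\beta}_k(t)]_j\neq0\}$,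 and let $k^*$ be the smallest $k\ge1$ such that $\mathcal{X}_{T+1}^{(k)}\subseteq\mathcal{X}_1^{(k)}$ or $\mathcal{X}_1^{(k)}=\emptyset$. Then the periodic reference output trajectory is trackable from $\mathbf{x}_0$ (i.e. there exists $\{\mathbf{u}(t)\}_{t\in\mathbb{Z}_+}\subset\mathcal{L}_M$ such that the state trajectory with $\mathbf{x}(0)=\mathbf{x}_0$ satisfies $H\mathbf{x}(t)=\mathbf{y}_r(t)$ for all $t\ge1$) if and only if: (i) $\mathcal{X}_1^{(k^* )}\neq\emptyset$ and $\mathcal{X}_{T+1}^{(k^* )}\subseteq\mathcal{X}_1^{(k^* )}$; and (ii) there exists $\mathbf{u}\in\mathcal{L}_M$ such that $L\ltimes\mathbf{u}\ltimes\mathbf{x}_0\in\mathcal{X}_1^{(k^* )}$.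
   Context: $\delta_k^i$ is the $i$-th canonical vector of $\mathbb{R}^k$; $\mathcal{L}_k$ is the set of canonical vectors of $\mathbb{R}^k$; $\mathcal{L}_{k\times q}$ the set of $k\times q$ matrices whose columns lie in $\mathcal{L}_k$. $N=2^n$, $M=2^m$, $P=2^p$. $L=[L_1|\cdots|L_M]$ with $L_i\in\mathcal{L}_{N\times N}$, and $L\ltimes\delta_M^i\ltimes\mathbf{x}=L_i\mathbf{x}$. $\vee$ is entrywise Boolean OR, $\odot$ is the entrywise (Hadamard) product, matrix–vector products are ordinary (only the zero/nonzero pattern of the vectors matters), and $[\mathbf{w}]_j$ is the $j$-th entry of $\mathbf{w}$. *)

From mathcomp Require Import all_boot all_algebra.
Set Implicit Arguments. Unset Strict Implicit. Unset Printing Implicit Defensive.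
Import GRing.Theory.
Local Open Scope ring_scope.

(* Conventions: N = 2^n, M = 2^m, P = 2^p.  The canonical vector delta_k^i is
   represented by its index i : 'I_k (0-based).  The logical matrix
   L = [L_1 | ... | L_M] in L_{N x NM} is given by its columns:
   L k j = index of the column j of the block L_k, i.e. L_k delta_N^j = delta_N^(L k j),
   so that L |x delta_M^k |x delta_N^j = delta_N^(L k j).
   Likewise H in L_{P x N} is given by H j = index of its j-th column.
   All vectors alpha, beta, v are nat column vectors; products are ordinary. *)

Section BCN.
Variables (n m p : nat).
Variable L : 'I_(2^m) -> 'I_(2^n) -> 'I_(2^n).
Variable H : 'I_(2^n) -> 'I_(2^p).
Variable T : nat.
Variable yr : nat -> 'I_(2^p).   (* y_r(t) = delta_P^(yr t), for t >= 1 *)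

Definition delta k (j : 'I_k) : 'cV[nat]_k := \col_i ((i == j) : nat).

Definition Lmat (k : 'I_(2^m)) : 'M[nat]_(2^n) := \matrix_(i, j) ((i == L k j) : nat).
Definition Hmat : 'M[nat]_(2^p, 2^n) := \matrix_(i, j) ((i == H j) : nat).

Definition bormx a b (A B : 'M[nat]_(a, b)) : 'M[nat]_(a, b) :=
  \matrix_(i, j) (((A i j != 0%N) || (B i j != 0%N)) : nat).
Definition hadamard a b (A B : 'M[nat]_(a, b)) : 'M[nat]_(a, b) :=
  \matrix_(i, j) (A i j * B i j)%N.

Definition Ltot : 'M[nat]_(2^n) := \big[@bormx _ _/0]_(k < 2^m) Lmat k.

Definition vvec (t : nat) : 'cV[nat]_(2^n) := (Hmat^T) *m delta (yr t).

Fixpoint alpha_aux (d : nat) : 'cV[nat]_(2^n) :=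
  match d with
  | 0 => vvec 1
  | d'.+1 => hadamard (vvec d.+1) (Ltot *m alpha_aux d')
  end.
Definition alpha (t : nat) := alpha_aux t.-1.

(* backward recursion: bw prev top d = beta(T+1-d), with beta(T+1) = top and
   beta(t) = prev(t) (.) (Ltot^T beta(t+1)) *)
Fixpoint bw (prev : nat -> 'cV[nat]_(2^n)) (top : 'cV[nat]_(2^n)) (d : nat)
  : 'cV[nat]_(2^n) :=
  match d with
  | 0 => top
  | d'.+1 => hadamard (prev (T.+1 - d)%N) (Ltot^T *m bw prev top d')
  end.
Definition bwfun prev top (t : nat) := bw prev top (T.+1 - t).

Fixpoint beta_aux (k : nat) : nat -> 'cV[nat]_(2^n) :=
  match k with
  | 0 => bwfun alpha (alpha T.+1)
  | k'.+1 => let b := beta_aux k' in bwfun b (hadamard (b T.+1) (b 1%N))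
  end.
(* beta k t = beta_k(t), for k >= 1, t in [1, T+1] *)
Definition beta (k : nat) := beta_aux k.-1.

Definition Xset (k t : nat) : {set 'I_(2^n)} := [set j | beta k t j 0 != 0%N].

Definition kcond (k : nat) : Prop :=
  Xset k T.+1 \subset Xset k 1 \/ Xset k 1 = set0.

Fixpoint traj (u : nat -> 'I_(2^m)) (x0 : 'I_(2^n)) (t : nat) : 'I_(2^n) :=
  match t with
  | 0 => x0
  | t'.+1 => L (u t') (traj u x0 t')
  end.

Definition trackable (x0 : 'I_(2^n)) : Prop :=
  exists u : nat -> 'I_(2^m),
    forall t, (1 <= t)%N -> Hmat *m delta (traj u x0 t) = delta (yr t).

End BCN.

Definition periodic_from1 (A : Type) (y : nat -> A) (T : nat) : Prop :=
  forall t, (1 <= t)%N -> y (t + T)%N = y t.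

From mathcomp Require Import all_boot all_algebra.
From mathcomp Require Import zify.
Set Implicit Arguments. Unset Strict Implicit. Unset Printing Implicit Defensive.
Import GRing.Theory.
Local Open Scope ring_scope.

(* Only zero patterns matter, so each vector is read as the set of states
   where it is nonzero.  alpha(t) collects the states reachable at phase t
   along outputs matching the reference; the backward sweep beta_k(t) keeps
   those that can be continued up to phase T+1, and beta_{k+1} moreover asks
   the phase-(T+1) state to be a phase-1 state of beta_k.  A tracking
   trajectory visits X_t^(k) at every time congruent to t, which gives
   necessity.  Conversely, every state of X_t has a successor in X_{t+1}, so
   once X_{T+1} is contained in X_1 a feedback picking such successors stays
   in the X's forever, which gives sufficiency.  Finally
   X_{T+1}^(k+1) = X_{T+1}^(k) /\ X_1^(k), so X_{T+1}^(k) strictly shrinks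
   until the stopping condition holds and k* exists. *)

Lemma sum_nat_neq0 (I : finType) (F : I -> nat) :
  ((\sum_(i : I) F i)%R != 0%N) = [exists i, F i != 0%N].
Proof. by rewrite -negb_forall; congr negb; apply: sum_nat_eq0. Qed.

Lemma mulmx_nat_neq0 a b c (A : 'M[nat]_(a, b)) (B : 'M[nat]_(b, c)) i j :
  ((A *m B) i j != 0%N) = [exists k, (A i k != 0%N) && (B k j != 0%N)].
Proof.
rewrite mxE sum_nat_neq0; apply: eq_existsb => k.
by rewrite -negb_or -muln_eq0.
Qed.

Lemma hadamard_neq0 a b (A B : 'M[nat]_(a, b)) i j :
  (hadamard A B i j != 0%N) = (A i j != 0%N) && (B i j != 0%N).
Proof. by rewrite mxE muln_eq0 negb_or. Qed.

Lemma big_bormx_neq0 a b (I : Type) (r : seq I) (F : I -> 'M[nat]_(a, b)) i j :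
  ((\big[@bormx a b/0]_(k <- r) F k) i j != 0%N) = has (fun k => F k i j != 0%N) r.
Proof.
elim: r => [|x r IH]; first by rewrite big_nil mxE.
by rewrite big_cons mxE /= IH; case: (_ != 0%N); case: has.
Qed.

Section Network.

Variables (n m : nat) (L : 'I_(2^m) -> 'I_(2^n) -> 'I_(2^n)).

Lemma Ltot_neq0 i j : (Ltot L i j != 0%N) = [exists u, L u j == i].
Proof.
rewrite /Ltot big_bormx_neq0; apply/hasP/existsP.
- by case=> u _; rewrite mxE; case: (eqVneq i (L u j)) => [->|] //; exists u.
- by case=> u /eqP <-; exists u; rewrite ?mem_index_enum // mxE eqxx.
Qed.

Lemma Ltot_mul_neq0 (a : 'cV[nat]_(2^n)) i :
  ((Ltot L *m a) i 0 != 0%N) = [exists j, [exists u, L u j == i] && (a j 0 != 0%N)].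
Proof. by rewrite mulmx_nat_neq0; apply: eq_existsb => j; rewrite Ltot_neq0. Qed.

Lemma trLtot_mul_neq0 (b : 'cV[nat]_(2^n)) j :
  (((Ltot L)^T *m b) j 0 != 0%N) = [exists u, b (L u j) 0 != 0%N].
Proof.
rewrite mulmx_nat_neq0; apply/existsP/existsP.
- by case=> i; rewrite mxE Ltot_neq0 => /andP[/existsP[u /eqP <-] Hb]; exists u.
- case=> u Hu; exists (L u j); rewrite mxE Ltot_neq0 Hu andbT.
  by apply/existsP; exists u.
Qed.

Lemma viable_control (S : nat -> {set 'I_(2^n)}) (x0 : 'I_(2^n)) :
  (exists u, L u x0 \in S 0%N) ->
  (forall t x, x \in S t -> exists u, L u x \in S t.+1) ->
  exists u : nat -> 'I_(2^m), forall t, traj L u x0 t.+1 \in S t.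
Proof.
case=> u0 Hx0 HS.
pose f t x := odflt u0 [pick u | L u x \in S t].
have f_in t x : (exists u, L u x \in S t) -> L (f t x) x \in S t.
  by case=> u Hu; rewrite /f; case: pickP => [//|/(_ u)]; rewrite Hu.
pose fix x t := if t is t'.+1 then L (f t' (x t')) (x t') else x0.
exists (fun t => f t (x t)).
have traj_x t : traj L (fun t => f t (x t)) x0 t = x t.
  by elim: t => //= t ->.
elim=> [|t IH]; rewrite traj_x; apply: f_in; first by exists u0.
by apply: HS; move: IH; rewrite traj_x.
Qed.

Variables (T : nat) (prev : nat -> 'cV[nat]_(2^n)) (top : 'cV[nat]_(2^n)).

Lemma bwfun_top : bwfun L T prev top T.+1 = top.
Proof. by rewrite /bwfun subnn. Qed.

Lemma bwfun_neq0 t j : (t <= T)%N ->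
  (bwfun L T prev top t j 0 != 0%N) =
  (prev t j 0 != 0%N) && [exists u, bwfun L T prev top t.+1 (L u j) 0 != 0%N].
Proof.
by move=> tT; rewrite /bwfun subSn //= subSS subKn // hadamard_neq0 trLtot_mul_neq0.
Qed.

Lemma bwfun_sub_prev t j :
  (forall i, top i 0 != 0%N -> prev T.+1 i 0 != 0%N) -> (t <= T.+1)%N ->
  bwfun L T prev top t j 0 != 0%N -> prev t j 0 != 0%N.
Proof.
move=> top_prev; rewrite leq_eqVlt => /orP[/eqP->|tT].
  by rewrite bwfun_top; apply: top_prev.
by rewrite bwfun_neq0 // => /andP[].
Qed.

Lemma bwfun_path (y : nat -> 'I_(2^n)) :
  (forall t, (1 <= t <= T)%N -> exists u, y t.+1 = L u (y t)) ->
  top (y T.+1) 0 != 0%N ->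
  (forall t, (1 <= t <= T)%N -> prev t (y t) 0 != 0%N) ->
  forall t, (1 <= t <= T.+1)%N -> bwfun L T prev top t (y t) 0 != 0%N.
Proof.
move=> Hy Htop Hprev t /andP[t1 tT].
move Ed: (T.+1 - t)%N => d; elim: d t Ed t1 tT => [|d IH] t Ed t1 tT.
  by rewrite (_ : t = T.+1) ?bwfun_top //; lia.
have tT' : (t <= T)%N by lia.
rewrite bwfun_neq0 // Hprev ?t1 //=.
have [u Hu] : exists u, y t.+1 = L u (y t) by apply: Hy; lia.
by apply/existsP; exists u; rewrite -Hu IH //; lia.
Qed.

End Network.

Lemma periodic_from1_mulD (A : Type) (y : nat -> A) T :
  periodic_from1 y T -> forall q t, (1 <= t)%N -> y (q * T + t)%N = y t.
Proof.
move=> Hp; elim=> [|q IH] t t1; first by rewrite mul0n add0n.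
by rewrite mulSn -addnA addnC Hp ?IH //; lia.
Qed.

Section Tracking.

Variables (n m p : nat) (L : 'I_(2^m) -> 'I_(2^n) -> 'I_(2^n)).
Variables (H : 'I_(2^n) -> 'I_(2^p)) (T : nat) (yr : nat -> 'I_(2^p)).

Local Notation X := (Xset L H T yr).

Lemma Hmat_delta x i : (Hmat H *m delta x) i 0 = (i == H x) :> nat.
Proof.
rewrite mxE (bigD1 x) //= big1 ?addr0; first by rewrite !mxE eqxx mulr1.
by move=> j /negbTE Hj; rewrite !mxE Hj mulr0.
Qed.

Lemma Hmat_delta_eq x y : Hmat H *m delta x = delta y <-> H x = y.
Proof.
split; last by move=> <-; apply/matrixP => i j; rewrite ord1 Hmat_delta mxE.
by move/matrixP => /(_ (H x) 0); rewrite Hmat_delta mxE eqxx; case: eqP.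
Qed.

Lemma vvec_neq0 t j : (vvec H yr t j 0 != 0%N) = (H j == yr t).
Proof.
rewrite mulmx_nat_neq0; apply/existsP/idP.
- by case=> i; rewrite !mxE; case: (eqVneq i (H j)) => [<-|] //=; case: (i == yr t).
- by move/eqP=> Hj; exists (yr t); rewrite !mxE Hj eqxx.
Qed.

Lemma alpha_output t j :
  (1 <= t)%N -> alpha L H yr t j 0 != 0%N -> H j = yr t.
Proof.
case: t => // -[|t] _; rewrite /alpha /= ?hadamard_neq0 vvec_neq0; first by move/eqP.
by case/andP => /eqP.
Qed.

Lemma beta_aux_sub_alpha k t j : (t <= T.+1)%N ->
  beta_aux L H T yr k t j 0 != 0%N -> alpha L H yr t j 0 != 0%N.
Proof.
elim: k t j => [|k IH] t j tT /=; first exact: bwfun_sub_prev.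
move=> Hbw; apply: (IH _ _ tT); apply: (bwfun_sub_prev _ tT Hbw) => i.
by rewrite hadamard_neq0 => /andP[].
Qed.

Lemma Xset_output k t j : (1 <= t <= T.+1)%N -> j \in X k t -> H j = yr t.
Proof.
by rewrite inE => /andP[t1 tT] /(beta_aux_sub_alpha tT); apply: alpha_output.
Qed.

Lemma Xset_successor k t j : (t <= T)%N -> j \in X k t -> exists u, L u j \in X k t.+1.
Proof.
rewrite /Xset /beta => tT; case: k.-1 => [|i]; rewrite inE /= bwfun_neq0 //;
  by case/andP => _ /existsP[u Hu]; exists u; rewrite inE.
Qed.

Lemma Xset_top k : X k.+2 T.+1 = X k.+1 T.+1 :&: X k.+1 1.
Proof. by apply/setP => j; rewrite !inE /beta /= bwfun_top hadamard_neq0. Qed.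

Lemma card_Xset_top_ltn k :
  ~~ (X k.+1 T.+1 \subset X k.+1 1) -> (#|X k.+2 T.+1| < #|X k.+1 T.+1|)%N.
Proof. by move=> nsub; rewrite Xset_top proper_card // properIl. Qed.

Lemma exists_kcond : exists k, (1 <= k)%N /\ kcond L H T yr k.
Proof.
suff: forall k, (exists k', (1 <= k')%N /\ kcond L H T yr k') \/
                (#|X k.+1 T.+1| + k <= 2^n)%N.
  by case/(_ (2^n).+1) => // overflow; lia.
elim=> [|k [|IH]]; [right | by left |].
  by rewrite addn0 (leq_trans (max_card _)) ?card_ord.
have [sub|nsub] := boolP (X k.+1 T.+1 \subset X k.+1 1).
  by left; exists k.+1; split => //; left.
by right; have := card_Xset_top_ltn nsub; lia.
Qed.

Section Periodic.

Hypothesis yr_periodic : periodic_from1 yr T.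

Section TrackingTrajectory.

Variable x : nat -> 'I_(2^n).
Hypothesis x_step : forall t, exists u, x t.+1 = L u (x t).
Hypothesis x_tracks : forall t, (1 <= t)%N -> H (x t) = yr t.

Lemma x_stepD q t : exists u, x (q * T + t.+1)%N = L u (x (q * T + t)%N).
Proof. by rewrite addnS. Qed.

Lemma vvec_tracking q t : (1 <= t)%N -> vvec H yr t (x (q * T + t)) 0 != 0%N.
Proof.
by move=> t1; rewrite vvec_neq0 x_tracks ?(periodic_from1_mulD yr_periodic) //; lia.
Qed.

Lemma alpha_tracking q t : (1 <= t)%N -> alpha L H yr t (x (q * T + t)) 0 != 0%N.
Proof.
elim: t => // -[_ _|t IH _]; first exact: vvec_tracking.
rewrite /alpha /= hadamard_neq0 vvec_tracking // Ltot_mul_neq0.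
apply/existsP; exists (x (q * T + t.+1)%N); apply/andP; split; last exact: IH.
by have [u ->] := x_stepD q t.+1; apply/existsP; exists u.
Qed.

Lemma Xset_tracking k q t : (1 <= t <= T.+1)%N -> x (q * T + t)%N \in X k t.
Proof.
rewrite inE /beta; elim: k.-1 q t => [|i IH] q.
  apply: bwfun_path => [s _||s /andP[s1 _]]; first exact: x_stepD.
    exact: alpha_tracking.
  exact: alpha_tracking.
apply: bwfun_path => [s _||s /andP[s1 sT]]; first exact: x_stepD.
  rewrite hadamard_neq0 IH //=.
  by rewrite (_ : q * T + T.+1 = q.+1 * T + 1)%N ?IH // mulSn; lia.
by apply: IH; lia.
Qed.

End TrackingTrajectory.

Lemma Xset_of_trackable k x0 :
  trackable L H yr x0 -> exists u, L u x0 \in X k 1.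
Proof.
case=> u Hu; exists (u 0%N).
have := @Xset_tracking (traj L u x0) _ _ k 0 1; rewrite mul0n; apply => //.
- by move=> t; exists (u t).
- by move=> t t1; apply/Hmat_delta_eq/Hu.
Qed.

Hypothesis T_gt0 : (0 < T)%N.

Lemma Xset_wrap k t : X k T.+1 \subset X k 1 ->
  X k (t %% T).+2 \subset X k (t.+1 %% T).+1.
Proof.
move=> top_sub; rewrite (_ : t.+1 %% T = (t %% T).+1 %% T)%N; last first.
  by rewrite -addn1 -modnDml addn1.
have := ltn_pmod t T_gt0; rewrite leq_eqVlt => /orP[/eqP ->|small]; last first.
  by rewrite (modn_small small).
by rewrite modnn.
Qed.

Lemma trackable_of_Xset k x0 : X k T.+1 \subset X k 1 ->
  (exists u, L u x0 \in X k 1) -> trackable L H yr x0.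
Proof.
move=> top_sub x0_succ.
have [u Hu] : exists u, forall t, traj L u x0 t.+1 \in X k (t %% T).+1.
  apply: viable_control => [|t y Hy]; first by rewrite mod0n.
  have [v Hv] := Xset_successor (ltn_pmod t T_gt0) Hy.
  by exists v; apply: subsetP (Xset_wrap t top_sub) _ Hv.
exists u => -[//|t] _; apply/Hmat_delta_eq.
have phase_t : (1 <= (t %% T).+1 <= T.+1)%N by have := ltn_pmod t T_gt0; lia.
rewrite (Xset_output phase_t (Hu t)) {2}(divn_eq t T) -addnS.
by rewrite (periodic_from1_mulD yr_periodic).
Qed.

End Periodic.

End Tracking.

Theorem theorem2 (n m p : nat)
  (L : 'I_(2^m) -> 'I_(2^n) -> 'I_(2^n)) (H : 'I_(2^n) -> 'I_(2^p))
  (T : nat) (yr : nat -> 'I_(2^p)) (x0 : 'I_(2^n)) :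
  (1 <= T)%N ->
  periodic_from1 yr T ->
  (forall T', (1 <= T')%N -> (T' < T)%N -> ~ periodic_from1 yr T') ->
  (exists k, (1 <= k)%N /\ kcond L H T yr k) /\
  (forall kstar, (1 <= kstar)%N -> kcond L H T yr kstar ->
     (forall k, (1 <= k)%N -> (k < kstar)%N -> ~ kcond L H T yr k) ->
     (trackable L H yr x0 <->
        (Xset L H T yr kstar 1 != set0 /\
         Xset L H T yr kstar T.+1 \subset Xset L H T yr kstar 1) /\
        (exists u : 'I_(2^m), L u x0 \in Xset L H T yr kstar 1))).
Proof.
move=> T_gt0 yr_periodic _; split; first exact: exists_kcond.
move=> k _ kcond_k _; split; last first.
  by case=> -[_ top_sub]; apply: trackable_of_Xset.
move=> /(Xset_of_trackable yr_periodic k) [u Hu].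
have X1_neq0 : Xset L H T yr k 1 != set0 by apply/set0Pn; exists (L u x0).
case: kcond_k => [top_sub|X1_eq0]; last by rewrite X1_eq0 eqxx in X1_neq0.
by split; [split | exists u].
Qed.
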